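(* Let $(\Gamma,g)$ be a vertex-weighted metric graph of genus $g(\Gamma)$, and let $F$ be a tropical meromorphic function on $\Gamma$ with $\operatorname{div}(F)+K_\Gamma\geq0$. Then for every $x\in\Gamma$ and every tangent direction $v$ at $x$, $|d_vF(x)|\leq2g(\Gamma)-1$. If $K_\Gamma$ is effective (i.e. $\Gamma$ has no genus-zero leaves), then $|d_vF(x)|\leq2g(\Gamma)-2$.
   Context: A vertex-weighted metric graph is a compact connected metric graph with finite vertex set and weights $g(x)\in\mathbb{Z}_{\geq0}$ on vertices; non-vertices have weight $0$ and valency $\deg(x)=2$. Genus: $g(\Gamma)=h_1(\Gamma)+\sum_xg(x)$. Canonical divisor: $K_\Gamma=\sum_x(2g(x)-2+\deg(x))(x)$. A genus-zero leaf is a vertex of weight $0$ and valency $1$. A tropical meromorphic function is a continuous piecewise affine function $\Gamma\to\mathbb{R}$ with integer slopes; $d_vF(x)$ is the slope of $F$ at $x$ in direction $v$, and $\operatorname{div}(F)=\sum_x\operatorname{ord}_x(F)(x)$ with $\operatorname{ord}_x(F)=-\sum_vd_vF(x)$, the sum over tangent directions at $x$. *)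

From HB Require Import structures.
From mathcomp Require Import all_boot all_order all_algebra.
From mathcomp Require Import boolp classical_sets reals.
Set Implicit Arguments. Unset Strict Implicit. Unset Printing Implicit Defensive.
Import Order.TTheory GRing.Theory Num.Theory.
Local Open Scope ring_scope.

(* Edge e is identified with the segment [0, len e],
   0 corresponding to src e and len e to tgt e. *)
Record mgraph (R : realType) := MGraph {
  vert : finType;
  edge : finType;
  src : edge -> vert;
  tgt : edge -> vert;
  len : edge -> R;
  len_pos : forall e, 0 < len e;
  wt : vert -> nat }.

Section MetricGraph.
Variables (R : realType) (G : mgraph R).

Definition adj : rel (vert G) := fun u w =>
  [exists e, ((src e == u) && (tgt e == w)) || ((src e == w) && (tgt e == u))].

Definition mg_connected : Prop := forall u w : vert G, connect adj u w.

(* valency of a vertex: number of half-edges (a loop counts twice) *)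
Definition deg (v : vert G) : nat :=
  #|[set e | src e == v]| + #|[set e | tgt e == v]|.

(* g(Gamma) = h_1(Gamma) + sum of weights, with h_1 = |E| - |V| + 1 *)
Definition genus : int :=
  (#|edge G|)%:Z - (#|vert G|)%:Z + 1 + \sum_(v : vert G) (wt v)%:Z.

(* points of Gamma: vertices, or interior points t (0 < t < len e) of edges *)
Inductive gpoint := PVert of vert G | PEdge of edge G & R.

Definition valid (x : gpoint) : Prop :=
  match x with PVert _ => True | PEdge e t => 0 < t < len e end.

(* tangent directions: (e, true) = leaving along e in the direction of
   increasing parameter, (e, false) = decreasing parameter. *)
Definition is_dir (x : gpoint) (d : edge G * bool) : bool :=
  match x with
  | PVert v => if d.2 then src d.1 == v else tgt d.1 == v
  | PEdge e _ => d.1 == e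
  end.

Definition Kcoef (x : gpoint) : int :=
  match x with
  | PVert v => 2 * (wt v)%:Z - 2 + (deg v)%:Z
  | PEdge _ _ => 0
  end.

Definition K_effective : Prop := forall x, valid x -> 0 <= Kcoef x.

Definition pw_affine_int (f : R -> R) (L : R) : Prop :=
  exists ts : seq R,
    [/\ path <%R 0 ts, last 0 ts = L &
      forall i, (i < size ts)%N ->
        exists s : int, forall y, nth 0 (0 :: ts) i <= y <= nth 0 ts i ->
          f y = f (nth 0 (0 :: ts) i) + s%:~R * (y - nth 0 (0 :: ts) i)].

Record trop_fun := TropFun {
  FV : vert G -> R;
  FE : edge G -> R -> R;
  FE_src : forall e, FE e 0 = FV (src e);
  FE_tgt : forall e, FE e (len e) = FV (tgt e);
  FE_pw : forall e, pw_affine_int (FE e) (len e) }.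

Definition Fval (F : trop_fun) (x : gpoint) : R :=
  match x with PVert v => FV F v | PEdge e t => FE F e t end.

Definition dslope (F : trop_fun) (x : gpoint) (d : edge G * bool) (s : R) : Prop :=
  match x with
  | PVert v => exists2 eps, 0 < eps <= len d.1 &
      forall u, 0 < u < eps ->
        FE F d.1 (if d.2 then u else len d.1 - u) = FV F v + s * u
  | PEdge e t => exists2 eps,
      0 < eps /\ (if d.2 then t + eps <= len e else eps <= t) &
      forall u, 0 < u < eps ->
        FE F e (if d.2 then t + u else t - u) = FE F e t + s * u
  end.

Definition slope (F : trop_fun) (x : gpoint) (d : edge G * bool) : R :=
  xget 0 [set s | dslope F x d s].

Definition ord (F : trop_fun) (x : gpoint) : R :=
  - \sum_(d : edge G * bool | is_dir x d) slope F x d.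

Definition div_plus_K_ge0 (F : trop_fun) : Prop :=
  forall x, valid x -> 0 <= ord F x + (Kcoef x)%:~R.

End MetricGraph.

Arguments gpoint {R} G.
Arguments genus {R} G.
Arguments K_effective {R} G.
Arguments mg_connected {R} G.

From HB Require Import structures.
From mathcomp Require Import all_boot all_order all_algebra.
From mathcomp Require Import boolp classical_sets reals.
From mathcomp Require Import zify ring lra.
Set Implicit Arguments. Unset Strict Implicit. Unset Printing Implicit Defensive.
Import Order.TTheory GRing.Theory Num.Theory.
Local Open Scope ring_scope.

(* Subdividing every edge at the breakpoints of F turns (Gamma, F) into a finite
   graph with a potential F, an integer slope on each segment, and the same
   genus; div(F) + K is the nonnegative divisor D = K - (outgoing slopes), of
   total degree 2g - 2.  Take a segment e of slope s != 0, let u be its higher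
   end and S the connected component of u in the superlevel set {F >= F(u)}.
   Every segment leaving S goes downhill, e among them, so summing D over S
   gives 2g - 2 >= |s| + K(S).  As S is connected it has at least |S| - 1
   segments inside, and e has exactly one end in S, so
   K(S) = 2 w(S) - 2|S| + (ends of segments in S) >= -1, and K(S) >= 0 when K
   is effective. *)

Lemma sum_eq_mem (V : finType) (A : {pred V}) (a : V) :
  (\sum_(n in A) ((a == n) : nat))%N = (a \in A : nat).
Proof.
have [aA|aA] := boolP (a \in A).
  rewrite (bigD1 a) //= eqxx big1 // => n /andP[_].
  by rewrite eq_sym => /negbTE ->.
by rewrite big1 // => n nA; case: eqP => // an; rewrite an nA in aA.
Qed.

Lemma sum_nat_card (I : finType) (P : pred I) : (\sum_i (P i : nat))%N = #|[set i | P i]|.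
Proof.
rewrite cardsE -sum1_card [RHS]big_mkcond.
by apply: eq_bigr => i _; rewrite unfold_in; case: (P i).
Qed.

Lemma sum_mulrn_pick (M : nmodType) (I : finType) (x : I -> M) (b : pred I) (j : I) :
  (forall i, b i -> i = j) -> \sum_i x i *+ b i = x j *+ b j.
Proof.
move=> bj; rewrite (bigD1 j) //= big1 ?addr0 // => i ij.
by case bi: (b i) => //; rewrite (bj _ bi) eqxx in ij.
Qed.

Lemma sum_pair_bool (M : nmodType) (I : finType) (g : I * bool -> M) :
  \sum_p g p = \sum_i (g (i, true) + g (i, false)).
Proof.
rewrite (eq_bigr (fun i => \sum_b g (i, b))) => [|i _]; last by rewrite big_bool.
by rewrite pair_big /=; apply: eq_bigr => -[].
Qed.

Lemma Tagged_neq (I : eqType) (T_ : I -> eqType) (i j : I) (x : T_ i) (y : T_ j) :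
  i != j -> (Tagged T_ x == Tagged T_ y) = false.
Proof. by apply: contraNF => /eq_tag /= ->. Qed.

Lemma exists_switch (P : pred nat) n :
  P 0 -> ~~ P n -> exists2 i, (i < n)%N & P i && ~~ P i.+1.
Proof.
elim: n => [|n IH] P0 Pn; first by rewrite P0 in Pn.
have [Pn'|/IH[//|i lt_in Pi]] := boolP (P n); first by exists n; rewrite ?Pn'.
by exists i => //; apply: ltnW.
Qed.

Lemma affine_germ_unique (R : realFieldType) (f : R -> R) (c s s' eps eps' : R) :
  0 < eps -> 0 < eps' ->
  (forall u, 0 < u < eps -> f u = c + s * u) ->
  (forall u, 0 < u < eps' -> f u = c + s' * u) -> s' = s.
Proof.
move=> eps0 eps0' fs fs'; pose u := Num.min eps eps' / 2.
have [u0 ue ue'] : [/\ 0 < u, u < eps & u < eps'].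
  by rewrite /u; case: (leP eps eps') => h; split; lra.
have := fs u; have := fs' u; rewrite u0 ue ue' => -> // /(_ isT) /addrI /mulIf.
by apply; rewrite gt_eqF.
Qed.

Section PotentialGraph.
Variables (V E : finType) (orig term : E -> V) (slp : E -> int) (w : V -> nat).

(* For the slopes [slp] of a function along the oriented edges, [netslope n]
   is minus its order at [n]; [canon], [graph_genus] and [div_canon] are the
   canonical divisor, the genus and div + K of the graph with weights [w]. *)
Definition netslope (n : V) : int :=
  \sum_e (slp e *+ (orig e == n) - slp e *+ (term e == n)).
Definition valency (n : V) : int := \sum_e ((orig e == n)%:R + (term e == n)%:R).
Definition canon (n : V) : int := 2 * (w n)%:Z - 2 + valency n.
Definition graph_genus : int := #|E|%:Z - #|V|%:Z + 1 + \sum_n (w n)%:Z.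
Definition div_canon (n : V) : int := canon n - netslope n.

Lemma sum_netslope (A : {pred V}) : \sum_(n in A) netslope n =
  \sum_e (slp e *+ (orig e \in A) - slp e *+ (term e \in A)).
Proof.
rewrite exchange_big; apply: eq_bigr => e _.
by rewrite sumrB !sumrMnr !sum_eq_mem.
Qed.

Lemma sum_valency (A : {pred V}) : \sum_(n in A) valency n =
  \sum_e ((orig e \in A)%:R + (term e \in A)%:R).
Proof.
rewrite exchange_big; apply: eq_bigr => e _.
by rewrite big_split /= !sumrMnr !sum_eq_mem.
Qed.

Lemma sum_canon (A : {pred V}) : \sum_(n in A) canon n =
  2 * \sum_(n in A) (w n)%:Z - 2 * #|A|%:Z
  + \sum_e ((orig e \in A)%:R + (term e \in A)%:R).
Proof.
rewrite -sum_valency !big_split /= -mulr_sumr sumr_const.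
by rewrite -[_ *+ #|A|]mulr_natr [#|A|%:R]natz mulNr.
Qed.

Lemma sum_div_canon : \sum_n div_canon n = 2 * graph_genus - 2.
Proof.
rewrite sumrB (sum_canon predT) (sum_netslope predT) /=.
rewrite [X in _ - X]sumrB subrr subr0 sumr_const /graph_genus.
rewrite -[_ *+ #|_|]mulr_natr [#|_|%:R]natz.
have -> : \sum_(n in predT) (w n)%:Z = \sum_n (w n)%:Z by [].
have -> : #|@predT V| = #|V| by [].
have -> : #|xpredT : pred E| = #|E| by [].
lia.
Qed.

Variables (R : realDomainType) (pot : V -> R) (elen : E -> R).
Hypothesis elen_gt0 : forall e, 0 < elen e.
Hypothesis pot_increment : forall e, pot (term e) - pot (orig e) = (slp e)%:~R * elen e.
Hypothesis div_canon_ge0 : forall n, 0 <= div_canon n.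

Lemma graph_genus_ge1 : 1 <= graph_genus.
Proof.
have : 0 <= \sum_n div_canon n by apply: sumr_ge0.
by rewrite sum_div_canon; lia.
Qed.

Lemma slp_lt0 e : (slp e < 0) = (pot (term e) < pot (orig e)).
Proof. by rewrite -[RHS]subr_lt0 pot_increment pmulr_llt0 // ltrz0. Qed.

Lemma slp_gt0 e : (0 < slp e) = (pot (orig e) < pot (term e)).
Proof. by rewrite -[RHS]subr_gt0 pot_increment pmulr_lgt0 // ltr0z. Qed.

Definition descends_from (u : V) (e : E) : bool :=
  (orig e == u) && (pot (term e) < pot u) || (term e == u) && (pot (orig e) < pot u).

Lemma descends_from_end e : slp e != 0 -> exists u, descends_from u e.
Proof.
rewrite /descends_from; case: ltgtP => // [/[!slp_lt0] lt | /[!slp_gt0] lt] _.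
  by exists (orig e); rewrite eqxx lt.
by exists (term e); rewrite eqxx lt orbT.
Qed.

Section UpperComponent.
Variable u : V.

Definition above (n : V) : bool := pot u <= pot n.

(* [upper_comp] is the connected component of [u] in the superlevel set of
   [pot], computed by breadth-first search; [depth n] is the layer of [n]. *)
Definition upper_step (X : {set V}) : {set V} := u |: (X :|: [set n | above n &&
  [exists e, (orig e \in X) && (term e == n) || (term e \in X) && (orig e == n)]]).

Lemma upper_step_mono : {homo upper_step : X Y / X \subset Y}.
Proof.
move=> X Y sXY; apply/fintype.subsetP => n; rewrite !inE => /or3P[-> //|nX|/andP[an]].
  by rewrite (fintype.subsetP sXY) ?orbT.
move=> /fintype.existsP[e h]; rewrite an /=; apply/or3P; constructor 3.
apply/fintype.existsP; exists e.
by case/orP: h => /andP[/(fintype.subsetP sXY) -> ->]; rewrite ?orbT.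
Qed.

Definition upper_comp : {set V} := fixset upper_step.
Definition depth : V -> nat := fix_order upper_step.

Lemma upper_comp_above n : n \in upper_comp -> above n.
Proof.
rewrite /upper_comp /fixset; elim: #|V| n => [|k IH] n /=; first by rewrite inE.
by rewrite !inE => /or3P[/eqP -> | /IH | /andP[]] //; rewrite /above.
Qed.

Lemma below_notin_upper_comp n : pot n < pot u -> n \notin upper_comp.
Proof. by rewrite ltNge; apply: contra => /upper_comp_above. Qed.

Lemma root_in_upper_comp : u \in upper_comp.
Proof. by rewrite /upper_comp -(fixsetK upper_step_mono) !inE eqxx. Qed.

Lemma upper_comp_term e :
  orig e \in upper_comp -> above (term e) -> term e \in upper_comp.
Proof.
move=> oS aT; rewrite /upper_comp -(fixsetK upper_step_mono) !inE aT /=.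
by apply/or3P; constructor 3; apply/fintype.existsP; exists e; rewrite oS eqxx.
Qed.

Lemma upper_comp_orig e :
  term e \in upper_comp -> above (orig e) -> orig e \in upper_comp.
Proof.
move=> tS aO; rewrite /upper_comp -(fixsetK upper_step_mono) !inE aO /=.
by apply/or3P; constructor 3; apply/fintype.existsP; exists e; rewrite tS eqxx orbT.
Qed.

Definition parent_edge (n : V) (e : E) : bool :=
  [&& orig e \in upper_comp, term e \in upper_comp &
    (term e == n) && (depth (orig e) < depth n)%N
    || (orig e == n) && (depth (term e) < depth n)%N].

Lemma exists_parent_edge n : n \in upper_comp -> n != u -> exists e, parent_edge n e.
Proof.
move=> nS nu; have := in_iter_fix_orderE upper_step n; rewrite nS.
have := fix_order_gt0 upper_step n; rewrite nS -/(depth n).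
case dn: (depth n) => [//|k] _ /=; rewrite !inE (negbTE nu) /= => /orP[nk|].
  by have := fix_order_small upper_step_mono nk; rewrite -/(depth n) dn ltnn.
have sub := fintype.subsetP (iter_sub_fix upper_step_mono k).
have lt x : x \in iter k upper_step finset.set0 -> (depth x < k.+1)%N.
  by move/(fix_order_small upper_step_mono).
case/andP=> _ /fintype.existsP[e /orP[] /andP[ek /eqP en]]; exists e.
  by rewrite /parent_edge (sub _ ek) en nS eqxx dn (lt _ ek).
by rewrite /parent_edge (sub _ ek) en nS eqxx dn (lt _ ek) orbT.
Qed.

Definition deeper_end (e : E) : V :=
  if (depth (orig e) < depth (term e))%N then term e else orig e.

Lemma parent_edge_deeper_end n e : parent_edge n e -> n = deeper_end e.
Proof.
rewrite /deeper_end => /and3P[_ _ /orP[] /andP[/eqP <- lt]]; first by rewrite lt.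
by rewrite ltnNge (ltnW lt).
Qed.

Definition inner_edges : {set E} :=
  [set e | (orig e \in upper_comp) && (term e \in upper_comp)].

Lemma card_upper_comp_le (e' : E) : (#|upper_comp| <= #|inner_edges|.+1)%N.
Proof.
pose pe n := odflt e' [pick e | parent_edge n e].
have peP n : n \in upper_comp :\ u -> parent_edge n (pe n).
  rewrite !inE => /andP[nu nS]; rewrite /pe; case: pickP => [//|none].
  by have [e] := exists_parent_edge nS nu; rewrite none.
have pe_inj : {in upper_comp :\ u &, injective pe}.
  move=> n n' /peP/parent_edge_deeper_end dn /peP/parent_edge_deeper_end dn' e.
  by rewrite dn e -dn'.
have pe_inner : pe @: (upper_comp :\ u) \subset inner_edges.
  by apply/fintype.subsetP => _ /imsetP[n /peP /and3P[oS tS _] ->]; rewrite inE oS tS.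
rewrite (cardsD1 u upper_comp) root_in_upper_comp add1n ltnS.
by rewrite -(card_in_imset pe_inj) subset_leq_card.
Qed.

Variable e0 : E.
Hypothesis e0_descends : descends_from u e0.

Definition descent (e : E) : int :=
  slp e *+ (term e \in upper_comp) - slp e *+ (orig e \in upper_comp).

Lemma descent_ge0 e : 0 <= descent e.
Proof.
rewrite /descent; case oS: (orig e \in upper_comp); case tS: (term e \in upper_comp).
- by rewrite subrr.
- rewrite mulr0n mulr1n sub0r oppr_ge0 ltW // slp_lt0.
  have := upper_comp_above oS; rewrite /above; apply: lt_le_trans.
  by rewrite ltNge; apply: contraFN tS; apply: upper_comp_term.
- rewrite mulr0n mulr1n subr0 ltW // slp_gt0.
  have := upper_comp_above tS; rewrite /above; apply: lt_le_trans.
  by rewrite ltNge; apply: contraFN oS; apply: upper_comp_orig.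
- by rewrite subrr.
Qed.

Lemma descent_descending_edge : descent e0 = `|slp e0|.
Proof.
rewrite /descent; case/orP: e0_descends => /andP[/eqP eu lt].
- rewrite eu root_in_upper_comp (negbTE (below_notin_upper_comp lt)) mulr0n mulr1n.
  by rewrite sub0r ltr0_norm // slp_lt0 eu.
- rewrite eu root_in_upper_comp (negbTE (below_notin_upper_comp lt)) mulr0n mulr1n.
  by rewrite subr0 gtr0_norm // slp_gt0 eu.
Qed.

Lemma descending_edge_crosses :
  (orig e0 \in upper_comp)%:R + (term e0 \in upper_comp)%:R = 1 :> int.
Proof.
case/orP: e0_descends => /andP[/eqP eu lt].
  by rewrite eu root_in_upper_comp (negbTE (below_notin_upper_comp lt)).
by rewrite eu root_in_upper_comp (negbTE (below_notin_upper_comp lt)).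
Qed.

Lemma abs_slp_add_canon_le :
  `|slp e0| + \sum_(n in upper_comp) canon n <= 2 * graph_genus - 2.
Proof.
rewrite -sum_div_canon [X in _ <= X](bigID (fun n => n \in upper_comp)) /=.
have out_ge0 : 0 <= \sum_(n | n \notin upper_comp) div_canon n by apply: sumr_ge0.
have in_eq : \sum_(n in upper_comp) div_canon n =
    \sum_(n in upper_comp) canon n + \sum_e descent e.
  rewrite sumrB sum_netslope -sumrN; congr (_ + _); apply: eq_bigr => e _.
  by rewrite /descent opprB.
have : `|slp e0| <= \sum_e descent e.
  rewrite (bigD1 e0) //= descent_descending_edge lerDl.
  by apply: sumr_ge0 => e _; apply: descent_ge0.
by move=> le_descent; rewrite in_eq -addrA addrC lerD2r -[`|_|]addr0 lerD.
Qed.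

Lemma sum_canon_upper_comp_ge : -1 <= \sum_(n in upper_comp) canon n.
Proof.
rewrite sum_canon.
have w_ge0 : 0 <= \sum_(n in upper_comp) (w n)%:Z by apply: sumr_ge0.
have card_le := card_upper_comp_le e0.
have ends_ge : 2 * #|inner_edges|%:Z + 1 <=
    \sum_e ((orig e \in upper_comp)%:R + (term e \in upper_comp)%:R).
  rewrite (bigID (fun e => e \in inner_edges)) /= lerD //.
    rewrite (eq_bigr (fun=> 2)) => [|e]; last by rewrite inE => /andP[-> ->].
    by rewrite sumr_const; lia.
  have e0_out : e0 \notin inner_edges.
    rewrite inE; apply/negP => /andP[o t].
    by move/eqP: descending_edge_crosses; rewrite o t.
  rewrite (bigD1 e0) //= descending_edge_crosses lerDl.
  by apply: sumr_ge0 => e _; rewrite addr_ge0.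
move: w_ge0 ends_ge; set W := \sum_(n in upper_comp) _; set D := \sum_e _; lia.
Qed.

End UpperComponent.

Lemma abs_slp_le e : `|slp e| <= 2 * graph_genus - 1.
Proof.
have := graph_genus_ge1.
have [->|/descends_from_end[u desc]] := eqVneq (slp e) 0; first by lia.
have := abs_slp_add_canon_le desc; have := sum_canon_upper_comp_ge desc; lia.
Qed.

Lemma abs_slp_le_canon_ge0 : (forall n, 0 <= canon n) ->
  forall e, `|slp e| <= 2 * graph_genus - 2.
Proof.
move=> canon_ge0 e; have := graph_genus_ge1.
have [->|/descends_from_end[u desc]] := eqVneq (slp e) 0; first by lia.
have := abs_slp_add_canon_le desc.
have : 0 <= \sum_(n in upper_comp u) canon n by apply: sumr_ge0.
lia.
Qed.

End PotentialGraph.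

Section PiecewiseAffine.
Variables (R : realType) (G : mgraph R) (F : trop_fun G).

Definition cuts (e : edge G) : seq R := sval (cid (FE_pw F e)).

Lemma cuts_spec e : [/\ path <%R 0 (cuts e), last 0 (cuts e) = len e &
  forall i, (i < size (cuts e))%N -> exists s : int, forall y,
    nth 0 (0 :: cuts e) i <= y <= nth 0 (cuts e) i ->
    FE F e y = FE F e (nth 0 (0 :: cuts e) i) + s%:~R * (y - nth 0 (0 :: cuts e) i)].
Proof. exact: svalP (cid (FE_pw F e)). Qed.

Definition pieces (e : edge G) : nat := size (cuts e).
Definition cut (e : edge G) (i : nat) : R := nth 0 (0 :: cuts e) i.

Lemma cut_pieces e : cut e (pieces e) = len e.
Proof. by case: (cuts_spec e) => _ <- _; rewrite /cut /pieces (last_nth 0). Qed.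

Lemma pieces_gt0 e : (0 < pieces e)%N.
Proof.
have := len_pos e; rewrite -cut_pieces /cut.
by case: (pieces e) => //=; rewrite ltxx.
Qed.

Lemma cut_ltn e i j : (i < j <= pieces e)%N -> cut e i < cut e j.
Proof.
case/andP=> ij jp; apply: (sorted_ltn_nth lt_trans) => //.
- by case: (cuts_spec e).
- by rewrite inE /= ltnS (leq_trans (ltnW ij) jp).
Qed.

Lemma cut_le e i j : (i <= j <= pieces e)%N -> cut e i <= cut e j.
Proof.
case/andP; rewrite leq_eqVlt => /orP[/eqP -> // | ij jp].
by apply/ltW/cut_ltn; rewrite ij jp.
Qed.

Lemma cut_ge0 e i : (i <= pieces e)%N -> 0 <= cut e i.
Proof. by move=> ip; apply: (@cut_le e 0); rewrite ip. Qed.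

Lemma cut_le_len e i : (i <= pieces e)%N -> cut e i <= len e.
Proof. by move=> ip; rewrite -cut_pieces; apply: cut_le; rewrite ip /=. Qed.

Lemma exists_piece_slope e (i : 'I_(pieces e)) : exists s : int, forall y,
  cut e i <= y <= cut e i.+1 -> FE F e y = FE F e (cut e i) + s%:~R * (y - cut e i).
Proof. by case: (cuts_spec e) => _ _ /(_ i (ltn_ord i)). Qed.

Definition pslope e (i : 'I_(pieces e)) : int := sval (cid (exists_piece_slope i)).

Lemma piece_affine e (i : 'I_(pieces e)) y : cut e i <= y <= cut e i.+1 ->
  FE F e y = FE F e (cut e i) + (pslope i)%:~R * (y - cut e i).
Proof. exact: (svalP (cid (exists_piece_slope i)) y). Qed.

Lemma piece_increment e (i : 'I_(pieces e)) :
  FE F e (cut e i.+1) - FE F e (cut e i) = (pslope i)%:~R * (cut e i.+1 - cut e i).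
Proof.
rewrite (@piece_affine e i (cut e i.+1)); first by rewrite addrC addKr.
by rewrite lexx andbT; apply/ltW/cut_ltn; rewrite ltnSn ltn_ord.
Qed.

Lemma find_piece_right e t : 0 < t < len e ->
  exists i : 'I_(pieces e), cut e i <= t < cut e i.+1.
Proof.
case/andP=> t0 tl.
have [||i ip /andP[ci ct]] := @exists_switch (fun i => cut e i <= t) (pieces e).
- exact: ltW.
- by rewrite /= cut_pieces -ltNge.
by exists (Ordinal ip); rewrite ci ltNge.
Qed.

Lemma find_piece_left e t : 0 < t < len e ->
  exists i : 'I_(pieces e), cut e i < t <= cut e i.+1.
Proof.
case/andP=> t0 tl.
have [||i ip /andP[ci ct]] := @exists_switch (fun i => cut e i < t) (pieces e).
- exact: t0.
- by rewrite /= cut_pieces -leNgt ltW.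
by exists (Ordinal ip); rewrite ci leNgt.
Qed.

Definition first_piece e : 'I_(pieces e) := Ordinal (pieces_gt0 e).

Lemma last_piece_subproof e : ((pieces e).-1 < pieces e)%N.
Proof. by rewrite prednK // pieces_gt0. Qed.

Definition last_piece e : 'I_(pieces e) := Ordinal (last_piece_subproof e).

Lemma dslope_slope x d s : dslope F x d s -> slope F x d = s.
Proof.
move=> h; apply: xget_unique => // s'; case: x h => [v|e t] /=.
- by case=> eps /andP[eps0 _] fs [eps' /andP[eps0' _] fs']; apply: affine_germ_unique fs fs'.
- by case=> eps [eps0 _] fs [eps' [eps0' _] fs']; apply: affine_germ_unique fs fs'.
Qed.

Lemma slope_right e t (i : 'I_(pieces e)) : cut e i <= t < cut e i.+1 ->
  slope F (PEdge e t) (e, true) = (pslope i)%:~R.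
Proof.
case/andP=> it ti; apply: dslope_slope => /=; have := cut_le_len (ltn_ord i).
exists (cut e i.+1 - t); first by split; lra.
move=> u /andP[u0 ut]; rewrite (@piece_affine e i (t + u)) ?(@piece_affine e i t).
- by ring.
- by apply/andP; split; lra.
- by apply/andP; split; lra.
Qed.

Lemma slope_left e t (i : 'I_(pieces e)) : cut e i < t <= cut e i.+1 ->
  slope F (PEdge e t) (e, false) = - (pslope i)%:~R.
Proof.
case/andP=> it ti; apply: dslope_slope => /=; have := cut_ge0 (ltnW (ltn_ord i)).
exists (t - cut e i); first by split; lra.
move=> u /andP[u0 ut]; rewrite (@piece_affine e i (t - u)) ?(@piece_affine e i t).
- by ring.
- by apply/andP; split; lra.
- by apply/andP; split; lra.
Qed.

Lemma slope_src e : slope F (PVert (src e)) (e, true) = (pslope (first_piece e))%:~R.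
Proof.
apply: dslope_slope => /=; have := cut_le_len (ltn_ord (first_piece e)).
have := @cut_ltn e 0 1; rewrite pieces_gt0 /= => /(_ isT) c1.
have c0 : cut e 0 = 0 by [].
exists (cut e 1); first by apply/andP; split; lra.
move=> u /andP[u0 u1]; rewrite (@piece_affine e (first_piece e) u) /= c0.
  by rewrite -(FE_src F e) subr0.
by apply/andP; split; lra.
Qed.

Lemma slope_tgt e : slope F (PVert (tgt e)) (e, false) = - (pslope (last_piece e))%:~R.
Proof.
set i := last_piece e; have iS : i.+1 = pieces e by rewrite /= prednK ?pieces_gt0.
have := piece_increment i; rewrite iS cut_pieces (FE_tgt F e) => incr.
have ci : cut e i < cut e i.+1 by apply: cut_ltn; rewrite ltnSn iS leqnn.
rewrite iS cut_pieces in ci; have c0 := cut_ge0 (ltnW (ltn_ord i)).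
apply: dslope_slope => /=; exists (len e - cut e i); first by apply/andP; split; lra.
move=> u /andP[u0 ui]; rewrite (@piece_affine e i (len e - u)).
  by rewrite -[FV F (tgt e)](subrK (FE F e (cut e i))) incr; ring.
by rewrite iS cut_pieces; apply/andP; split; lra.
Qed.

End PiecewiseAffine.

Section Subdivision.
Variables (R : realType) (G : mgraph R) (F : trop_fun G).

(* The subdivided graph: its segments are the pairs (e, i) with i < pieces e,
   its nodes the vertices and the inner breakpoints (e, j), j < pieces e - 1,
   the breakpoint (e, j) sitting at [cut F e j.+1].  Segment (e, i) runs from
   breakpoint i - 1 (or src e) to breakpoint i (or tgt e), which is what
   [unlift] at the first, resp. last, piece computes. *)
Local Notation segment := {e : edge G & 'I_(pieces F e)}.
Local Notation inner_point := {e : edge G & 'I_(pieces F e).-1}.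
Local Notation node := (vert G + inner_point)%type.
Local Notation seg i := (Tagged (fun e => 'I_(pieces F e)) i).

Definition inner e (j : 'I_(pieces F e).-1) : node :=
  inr (Tagged (fun e => 'I_(pieces F e).-1) j).

Definition seg_orig (s : segment) : node :=
  if unlift (first_piece F (tag s)) (tagged s) is Some j then inner j
  else inl (src (tag s)).

Definition seg_term (s : segment) : node :=
  if unlift (last_piece F (tag s)) (tagged s) is Some j then inner j
  else inl (tgt (tag s)).

Definition seg_slope (s : segment) : int := pslope (tagged s).

Definition seg_len (s : segment) : R :=
  cut F (tag s) (tagged s).+1 - cut F (tag s) (tagged s).

Definition node_pot (n : node) : R :=
  match n with
  | inl v => FV F v
  | inr x => FE F (tag x) (cut F (tag x) (tagged x).+1)
  end.

Definition node_wt (n : node) : nat := if n is inl v then wt v else 0.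

Lemma val_lift_first e (j : 'I_(pieces F e).-1) : lift (first_piece F e) j = j.+1 :> nat.
Proof. by []. Qed.

Lemma val_lift_last e (j : 'I_(pieces F e).-1) : lift (last_piece F e) j = j :> nat.
Proof. by rewrite /= /bump leqNgt ltn_ord. Qed.

Lemma pot_orig s : node_pot (seg_orig s) = FE F (tag s) (cut F (tag s) (tagged s)).
Proof.
case: s => e i; rewrite /seg_orig /=; case: unliftP => [j ->|->] //=.
exact: esym (FE_src F e).
Qed.

Lemma pot_term s : node_pot (seg_term s) = FE F (tag s) (cut F (tag s) (tagged s).+1).
Proof.
case: s => e i; rewrite /seg_term /=; case: unliftP => [j ->|->] /=.
  by rewrite /bump leqNgt ltn_ord.
by rewrite prednK ?pieces_gt0 // cut_pieces (FE_tgt F e).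
Qed.

Lemma seg_len_gt0 s : 0 < seg_len s.
Proof. by rewrite subr_gt0 cut_ltn // ltnSn ltn_ord. Qed.

Lemma pot_increment s :
  node_pot (seg_term s) - node_pot (seg_orig s) = (seg_slope s)%:~R * seg_len s.
Proof. by rewrite pot_orig pot_term piece_increment. Qed.

Lemma orig_inl s v :
  (seg_orig s == inl v) = (tagged s == first_piece F (tag s)) && (src (tag s) == v).
Proof.
by case: s => e i; rewrite /seg_orig /=; case: unliftP => [j|] ->; rewrite ?lift_eqF ?eqxx.
Qed.

Lemma term_inl s v :
  (seg_term s == inl v) = (tagged s == last_piece F (tag s)) && (tgt (tag s) == v).
Proof.
by case: s => e i; rewrite /seg_term /=; case: unliftP => [j|] ->; rewrite ?lift_eqF ?eqxx.
Qed.

Lemma orig_inr s (x : inner_point) :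
  (seg_orig s == inr x) = (s == seg (lift (first_piece F (tag x)) (tagged x))).
Proof.
case: s x => e i [e' j]; rewrite /seg_orig /=; move: j.
case: (eqVneq e e') => [<-|ne] j; rewrite /inner.
  by case: unliftP => [j'|] ->; rewrite -sum_eqE /= ?eq_Tagged /= ?(inj_eq lift_inj) ?eq_liftF.
by case: unliftP => [j'|] ->; rewrite -sum_eqE /= ?Tagged_neq.
Qed.

Lemma term_inr s (x : inner_point) :
  (seg_term s == inr x) = (s == seg (lift (last_piece F (tag x)) (tagged x))).
Proof.
case: s x => e i [e' j]; rewrite /seg_term /=; move: j.
case: (eqVneq e e') => [<-|ne] j; rewrite /inner.
  by case: unliftP => [j'|] ->; rewrite -sum_eqE /= ?eq_Tagged /= ?(inj_eq lift_inj) ?eq_liftF.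
by case: unliftP => [j'|] ->; rewrite -sum_eqE /= ?Tagged_neq.
Qed.

Lemma sum_segment (M : nmodType) (g : segment -> M) :
  \sum_s g s = \sum_e \sum_(i < pieces F e) g (seg i).
Proof. by rewrite [RHS]sig_big_dep; apply: eq_bigr => -[]. Qed.

Lemma sum_orig_inl (M : nmodType) (g : segment -> M) v :
  \sum_s g s *+ (seg_orig s == inl v) = \sum_e g (seg (first_piece F e)) *+ (src e == v).
Proof.
rewrite sum_segment; apply: eq_bigr => e _; under eq_bigr do rewrite orig_inl /=.
by rewrite (sum_mulrn_pick _ (j := first_piece F e)) => [|i /andP[/eqP //]]; rewrite eqxx.
Qed.

Lemma sum_term_inl (M : nmodType) (g : segment -> M) v :
  \sum_s g s *+ (seg_term s == inl v) = \sum_e g (seg (last_piece F e)) *+ (tgt e == v).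
Proof.
rewrite sum_segment; apply: eq_bigr => e _; under eq_bigr do rewrite term_inl /=.
by rewrite (sum_mulrn_pick _ (j := last_piece F e)) => [|i /andP[/eqP //]]; rewrite eqxx.
Qed.

Lemma sum_orig_inr (M : nmodType) (g : segment -> M) x :
  \sum_s g s *+ (seg_orig s == inr x) = g (seg (lift (first_piece F (tag x)) (tagged x))).
Proof.
rewrite (sum_mulrn_pick _ (j := seg (lift (first_piece F (tag x)) (tagged x)))).
  by rewrite orig_inr eqxx.
by move=> s; rewrite orig_inr => /eqP.
Qed.

Lemma sum_term_inr (M : nmodType) (g : segment -> M) x :
  \sum_s g s *+ (seg_term s == inr x) = g (seg (lift (last_piece F (tag x)) (tagged x))).
Proof.
rewrite (sum_mulrn_pick _ (j := seg (lift (last_piece F (tag x)) (tagged x)))).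
  by rewrite term_inr eqxx.
by move=> s; rewrite term_inr => /eqP.
Qed.

Lemma netslope_inl v : netslope seg_orig seg_term seg_slope (inl v) = \sum_e
  (pslope (first_piece F e) *+ (src e == v) - pslope (last_piece F e) *+ (tgt e == v)).
Proof. by rewrite /netslope sumrB sum_orig_inl sum_term_inl -sumrB. Qed.

Lemma netslope_inr x : netslope seg_orig seg_term seg_slope (inr x) =
  pslope (lift (first_piece F (tag x)) (tagged x))
  - pslope (lift (last_piece F (tag x)) (tagged x)).
Proof. by rewrite /netslope sumrB sum_orig_inr sum_term_inr. Qed.

Lemma valency_inl v : valency seg_orig seg_term (inl v) = (deg v)%:Z.
Proof.
rewrite /valency big_split /= sum_orig_inl sum_term_inl !sumrMnr.
by rewrite !sum_nat_card /deg PoszD !natz.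
Qed.

Lemma valency_inr x : valency seg_orig seg_term (inr x) = 2.
Proof. by rewrite /valency big_split /= sum_orig_inr sum_term_inr. Qed.

Lemma ord_vert v : ord F (PVert v) = - (netslope seg_orig seg_term seg_slope (inl v))%:~R.
Proof.
rewrite /ord netslope_inl (big_morph _ (intrD _) (mulr0z _)) big_mkcond sum_pair_bool.
congr (- _); apply: eq_bigr => e _; rewrite /= !mulrb intrB; congr (_ + _).
  by case: eqP => [<-|_]; [exact: slope_src | rewrite mulr0z].
by case: eqP => [<-|_]; [exact: slope_tgt | rewrite mulr0z oppr0].
Qed.

Lemma ord_edge e t :
  ord F (PEdge e t) = - (slope F (PEdge e t) (e, true) + slope F (PEdge e t) (e, false)).
Proof.
rewrite /ord big_mkcond sum_pair_bool /= (bigD1 e) //= eqxx big1 ?addr0 // => e' /negbTE ne.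
by rewrite ne addr0.
Qed.

Lemma inner_valid e (j : 'I_(pieces F e).-1) : valid (PEdge e (cut F e j.+1)).
Proof.
have jS : (j.+1 < pieces F e)%N by rewrite -ltn_predRL.
apply/andP; split; first by apply: (@cut_ltn _ _ F e 0); rewrite ltn0Sn (ltnW jS).
by rewrite -(cut_pieces F e); apply: cut_ltn; rewrite jS leqnn.
Qed.

Lemma ord_inner e (j : 'I_(pieces F e).-1) : ord F (PEdge e (cut F e j.+1)) =
  (pslope (lift (last_piece F e) j) - pslope (lift (first_piece F e) j))%:~R.
Proof.
have jS : (j.+1 < pieces F e)%N by rewrite -ltn_predRL.
rewrite ord_edge (slope_right (i := lift (first_piece F e) j)); last first.
  by rewrite val_lift_first lexx; apply: cut_ltn; rewrite ltnSn.
rewrite (slope_left (i := lift (last_piece F e) j)); last first.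
  by rewrite val_lift_last lexx andbT; apply: cut_ltn; rewrite ltnSn (ltnW jS).
by rewrite intrB opprD opprK addrC.
Qed.

Lemma node_div_canon_ge0 : div_plus_K_ge0 F ->
  forall n, 0 <= div_canon seg_orig seg_term seg_slope node_wt n.
Proof.
move=> div_ge0 [v|[e j]]; rewrite /div_canon /canon.
  have := div_ge0 (PVert v) I; rewrite ord_vert -intrN -intrD ler0z addrC.
  by rewrite valency_inl.
have := div_ge0 _ (inner_valid j); rewrite /= addr0 ord_inner ler0z.
by rewrite valency_inr netslope_inr /node_wt /=; lia.
Qed.

Lemma node_canon_ge0 : K_effective G -> forall n, 0 <= canon seg_orig seg_term node_wt n.
Proof.
move=> K_ge0 [v|x]; rewrite /canon; first by rewrite valency_inl; exact: (K_ge0 (PVert v)).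
by rewrite valency_inr /node_wt; lia.
Qed.

Lemma card_segment : #|(segment : finType)| = (\sum_e (pieces F e).-1 + #|edge G|)%N.
Proof.
rewrite card_tagged sumnE big_map big_enum /= -sum1_card -big_split /=.
by apply: eq_bigr => e _; rewrite card_ord addn1 prednK ?pieces_gt0.
Qed.

Lemma card_node : #|(node : finType)| = (#|vert G| + \sum_e (pieces F e).-1)%N.
Proof.
rewrite card_sum card_tagged sumnE big_map big_enum /=; congr (_ + _)%N.
by apply: eq_bigr => e _; rewrite card_ord.
Qed.

Lemma node_genus : graph_genus segment node_wt = genus G.
Proof.
rewrite /graph_genus /genus card_segment card_node big_sumType /=.
have -> : \sum_(x : inner_point) (node_wt (inr x))%:Z = 0 by apply: big1.
by rewrite addr0; congr (_ + _); lia.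
Qed.

Lemma slope_seg_slope x d : valid x -> is_dir x d ->
  exists s : segment, `|slope F x d| = (`|seg_slope s|)%:~R.
Proof.
case: x => [v|e t] /=; case: d => e' [] /= hv /eqP hd.
- by exists (seg (first_piece F e')); rewrite -hd slope_src intr_norm.
- by exists (seg (last_piece F e')); rewrite -hd slope_tgt normrN intr_norm.
- have [i hi] := find_piece_right F hv; exists (seg i).
  by rewrite hd (slope_right hi) intr_norm.
- have [i hi] := find_piece_left F hv; exists (seg i).
  by rewrite hd (slope_left hi) normrN intr_norm.
Qed.

End Subdivision.

Theorem lemma4p8 (R : realType) (G : mgraph R) (F : trop_fun G) :
  mg_connected G -> div_plus_K_ge0 F ->
  (forall (x : gpoint G) (d : edge G * bool), valid x -> is_dir x d ->
     `|slope F x d| <= (2 * genus G - 1)%:~R) /\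
  (K_effective G ->
   forall (x : gpoint G) (d : edge G * bool), valid x -> is_dir x d ->
     `|slope F x d| <= (2 * genus G - 2)%:~R).
Proof.
move=> _ div_ge0.
have D_ge0 := node_div_canon_ge0 div_ge0.
have bound := abs_slp_le (@seg_len_gt0 _ _ F) (@pot_increment _ _ F) D_ge0.
have bound_eff K_eff := abs_slp_le_canon_ge0 (@seg_len_gt0 _ _ F) (@pot_increment _ _ F)
  D_ge0 (node_canon_ge0 (F := F) K_eff).
split=> [|K_eff] x d xv xd; have [s ->] := slope_seg_slope F xv xd.
  by rewrite ler_int -(node_genus F) bound.
by rewrite ler_int -(node_genus F) bound_eff.
Qed.
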